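(* Define $$\Psi_e(t)=\begin{cases}\tfrac{e^2}{4}t^2,&0\leq t\leq2,\\ e^t,&t>2.\end{cases}$$ Then: (a) $\Psi_e$ is a Young's function, and there are constants $0<m<M<\infty$ with $m\Psi_e(t)\leq\cosh(t)-1\leq M\Psi_e(t)$ for all $t\geq0$. Hence $L^{\Psi_e}(0,\infty)=L^{\cosh-1}(0,\infty)$ with equivalent norms. (b) With the Luxemburg norm, the fundamental function of $L^{\Psi_e}(0,\infty)$ is $$\varphi_e(t)=\begin{cases}\tfrac{e}{2}t^{1/2},&t\geq e^{-2},\\ \dfrac{1}{-\log t},&0<t<e^{-2}.\end{cases}$$ (c) $M_{\Psi_e}(s)=\sup_{t>0}\varphi_e(st)/\varphi_e(t)$ equals $1$ for $0<s\leq1$ and $s^{1/2}$ for $s>1$. (d) Consequently the upper fundamental index of $L^{\Psi_e}(0,\infty)$, and hence of $L^{\cosh-1}(0,\infty)$, equals $\tfrac12$, and the lower fundamental index equals $0$.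
   Context: Young's function: a convex $\Psi:[0,\infty)\to[0,\infty]$ with $\Psi(0)=\lim_{u\to0+}\Psi(u)=0$, $\Psi(u)\to\infty$ as $u\to\infty$, and $\Psi$ non-constant on $(0,\infty)$. The Orlicz space $L^\Psi(0,\infty)$ consists of measurable $f$ with $\int_0^\infty\Psi(\lambda|f|)<\infty$ for some $\lambda>0$. The Luxemburg norm is $\|f\|=\inf\{k>0:\int\Psi(|f|/k)\leq1\}$. The fundamental function is $\varphi(t)=\|\chi_E\|$ for $E$ of Lebesgue measure $t$. With $M_\Psi(s)=\sup_{t>0}\varphi(st)/\varphi(t)$, the fundamental indices are $$\underline{\beta}=\sup_{0<s<1}\frac{\log M_\Psi(s)}{\log s},\qquad \overline{\beta}=\inf_{s>1}\frac{\log M_\Psi(s)}{\log s}.$$ *)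

From Stdlib Require Import Reals Lra.
Open Scope R_scope.

(* Young's function (finite-valued version; the paper allows values in [0,oo],
   a finite-valued function satisfying this is in particular a Young function). *)
Definition convex_on_nonneg (Psi : R -> R) : Prop :=
  forall x y l, 0 <= x -> 0 <= y -> 0 <= l <= 1 ->
    Psi (l * x + (1 - l) * y) <= l * Psi x + (1 - l) * Psi y.

Definition young_function (Psi : R -> R) : Prop :=
  convex_on_nonneg Psi /\
  (forall u, 0 <= u -> 0 <= Psi u) /\
  Psi 0 = 0 /\
  (forall eps, eps > 0 -> exists d, d > 0 /\ forall u, 0 < u < d -> Psi u < eps) /\
  (forall B, exists u0, u0 >= 0 /\ forall u, u >= u0 -> Psi u > B) /\
  (exists u v, 0 < u /\ 0 < v /\ Psi u <> Psi v).

Definition is_glb (E : R -> Prop) (m : R) : Prop :=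
  (forall x, E x -> m <= x) /\ (forall b, (forall x, E x -> b <= x) -> b <= m).

Definition Psi_e (t : R) : R :=
  if Rle_dec t 2 then (exp 1 ^ 2 / 4) * t ^ 2 else exp t.

Definition cosh_m1 (t : R) : R := cosh t - 1.

(* Luxemburg norm of the indicator of a set E with Lebesgue measure t > 0:
   int Psi(|chi_E|/k) = t * Psi(1/k), so
   ||chi_E|| = inf { k > 0 : t * Psi(1/k) <= 1 }. *)
Definition luxemburg_indicator_set (Psi : R -> R) (t : R) : R -> Prop :=
  fun k => 0 < k /\ t * Psi (/ k) <= 1.

Definition is_fundamental_function (Psi : R -> R) (phi : R -> R) : Prop :=
  forall t, 0 < t -> is_glb (luxemburg_indicator_set Psi t) (phi t).

Definition is_dilation_function (phi : R -> R) (M : R -> R) : Prop :=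
  forall s, 0 < s -> is_lub (fun r => exists t, 0 < t /\ r = phi (s * t) / phi t) (M s).

Definition is_lower_index (M : R -> R) (b : R) : Prop :=
  is_lub (fun r => exists s, 0 < s < 1 /\ r = ln (M s) / ln s) b.

Definition is_upper_index (M : R -> R) (b : R) : Prop :=
  is_glb (fun r => exists s, 1 < s /\ r = ln (M s) / ln s) b.

Definition phi_e (t : R) : R :=
  if Rle_dec (exp (-2)) t then (exp 1 / 2) * sqrt t else / (- ln t).

From Stdlib Require Import Reals Lra Psatz.
Open Scope R_scope.

(** The two branches of [Psi_e] meet at [t = 2] with equal slope [e^2], so
    [Psi_e] lies above all its tangents and is convex; the identity
    [cosh t - 1 = (e^t - 1)^2 / (2 e^t)] with [t <= e^t - 1 <= t e^t] makes
    [cosh - 1] comparable to [Psi_e].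

    Since [Psi_e] is strictly increasing, [||chi_E||] is the [k] solving
    [t Psi_e(1/k) = 1], which gives [phi_e].  As [Psi_e(l u) <= l^2 Psi_e(u)]
    for [l <= 1], [phi_e(s t) <= sqrt s phi_e(t)] for [s >= 1], with equality
    at [t = 1]; for [s <= 1] the ratio [phi_e(s t) / phi_e(t) = log t / log (s t)]
    tends to [1] as [t -> 0].

    A Young function [Psi] with [m Psi_e <= Psi <= M Psi_e] has a fundamental
    function squeezed between [phi_e(m t)] and [phi_e(M t)], so its dilation
    function equals [1] on [(0,1)] and lies between [c sqrt s] and [C sqrt s]
    for [s > 1]; being submultiplicative it is in fact [>= sqrt s], and the
    indices are [0] and [1/2]. *)

Lemma exp_le_exp x y : x <= y -> exp x <= exp y.
Proof. intros [Hlt | ->]; [left; exact (exp_increasing _ _ Hlt) | lra]. Qed.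

Lemma ln_le_ln x y : 0 < x -> x <= y -> ln x <= ln y.
Proof. intros Hx [Hlt | ->]; [left; exact (ln_increasing _ _ Hx Hlt) | lra]. Qed.

Lemma exp_1_gt_2 : 2 < exp 1.
Proof. pose proof (exp_ineq1 1 ltac:(lra)). lra. Qed.

Lemma exp_shift_2 x : exp x = exp 1 ^ 2 * exp (x - 2).
Proof. replace x with (1 + 1 + (x - 2)) at 1 by ring. rewrite !exp_plus. ring. Qed.

Lemma one_add_half_sqr_le_exp d : -2 <= d -> (1 + d / 2) ^ 2 <= exp d.
Proof.
  intros Hd.
  replace (exp d) with (exp (d / 2) ^ 2)
    by (simpl; rewrite Rmult_1_r, <- exp_plus; f_equal; field).
  apply pow_incr. pose proof (exp_ineq1_le (d / 2)). lra.
Qed.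

Lemma exp_mul_one_sub_le d : exp d * (1 - d) <= 1.
Proof.
  replace 1 with (exp d * exp (- d)) at 2
    by (rewrite <- exp_plus, Rplus_opp_r; apply exp_0).
  apply Rmult_le_compat_l; [left; apply exp_pos |].
  pose proof (exp_ineq1_le (- d)). lra.
Qed.

Lemma sqrt_pow s n : 0 <= s -> sqrt (s ^ n) = sqrt s ^ n.
Proof.
  intros Hs. induction n as [| n IH]; [apply sqrt_1 |].
  simpl. rewrite sqrt_mult, IH; [reflexivity | exact Hs | apply pow_le, Hs].
Qed.

Lemma Rdiv_le_iff x y c : 0 < y -> (x / y <= c <-> x <= c * y).
Proof.
  intros Hy. split; intros H.
  - apply (Rmult_le_compat_r y) in H; [| lra].
    replace (x / y * y) with x in H by (field; lra). exact H.
  - apply (Rmult_le_reg_r y); [exact Hy |].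
    replace (x / y * y) with x by (field; lra). exact H.
Qed.

Lemma Rle_div_iff c x y : 0 < y -> (c <= x / y <-> c * y <= x).
Proof.
  intros Hy. split; intros H.
  - apply (Rmult_le_compat_r y) in H; [| lra].
    replace (x / y * y) with x in H by (field; lra). exact H.
  - apply (Rmult_le_reg_r y); [exact Hy |].
    replace (x / y * y) with x by (field; lra). exact H.
Qed.

Lemma Rlt_div_iff c x y : 0 < y -> (c < x / y <-> c * y < x).
Proof.
  intros Hy. split; intros H.
  - apply (Rmult_lt_compat_r y) in H; [| lra].
    replace (x / y * y) with x in H by (field; lra). exact H.
  - apply (Rmult_lt_reg_r y); [exact Hy |].
    replace (x / y * y) with x by (field; lra). exact H.
Qed.

Lemma Rdiv_le_Rdiv x1 x2 y1 y2 : 0 < x1 <= x2 -> 0 < y2 <= y1 -> x1 / y1 <= x2 / y2.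
Proof.
  intros Hx Hy. unfold Rdiv. apply Rmult_le_compat; try lra.
  - left; apply Rinv_0_lt_compat; lra.
  - apply Rinv_le_contravar; lra.
Qed.

Lemma is_lub_intro (E : R -> Prop) m :
  (forall x, E x -> x <= m) -> (forall b, b < m -> exists x, E x /\ b < x) ->
  is_lub E m.
Proof.
  intros Hub Happrox. split; [exact Hub |].
  intros b Hb. destruct (Rle_lt_dec m b) as [Hle | Hlt]; [exact Hle |].
  destruct (Happrox b Hlt) as [x [Hx Hbx]]. specialize (Hb x Hx). lra.
Qed.

Lemma lub_family_exists (E : R -> R -> Prop) :
  (forall s, 0 < s -> bound (E s)) -> (forall s, 0 < s -> exists x, E s x) ->
  exists M, forall s, 0 < s -> is_lub (E s) (M s).
Proof.
  intros Hbound Hne.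
  exists (fun s => match Rlt_dec 0 s with
           | left Hs => proj1_sig (completeness _ (Hbound s Hs) (Hne s Hs))
           | right _ => 0
           end).
  intros s Hs. destruct (Rlt_dec 0 s) as [Hs' | Hs']; [apply proj2_sig | contradiction].
Qed.

Lemma glb_family_exists (E : R -> R -> Prop) :
  (forall s, 0 < s -> exists m, forall x, E s x -> m <= x) ->
  (forall s, 0 < s -> exists x, E s x) ->
  exists M, forall s, 0 < s -> is_glb (E s) (M s).
Proof.
  intros Hbound Hne.
  destruct (lub_family_exists (fun s x => E s (- x))) as [M HM].
  - intros s Hs. destruct (Hbound s Hs) as [m Hm].
    exists (- m). intros x Hx. specialize (Hm _ Hx). lra.
  - intros s Hs. destruct (Hne s Hs) as [x Hx].
    exists (- x). rewrite Ropp_involutive. exact Hx.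
  - exists (fun s => - M s). intros s Hs. destruct (HM s Hs) as [Hub Hleast]. split.
    + intros x Hx.
      assert (- x <= M s) by (apply Hub; rewrite Ropp_involutive; exact Hx). lra.
    + intros b Hb.
      assert (M s <= - b) by (apply Hleast; intros x Hx; specialize (Hb _ Hx); lra). lra.
Qed.

Lemma luxemburg_set_compare (Psi1 Psi2 : R -> R) c t k :
  0 <= c -> 0 <= t -> (forall u, 0 <= u -> c * Psi1 u <= Psi2 u) ->
  luxemburg_indicator_set Psi2 t k -> luxemburg_indicator_set Psi1 (c * t) k.
Proof.
  intros Hc Ht Hcmp [Hk Hle]. split; [exact Hk |].
  pose proof (Hcmp (/ k) (Rlt_le _ _ (Rinv_0_lt_compat _ Hk))).
  assert (t * (c * Psi1 (/ k)) <= t * Psi2 (/ k)) by (apply Rmult_le_compat_l; assumption).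
  lra.
Qed.

Lemma fundamental_function_compare (Psi1 Psi2 phi1 phi2 : R -> R) c :
  0 < c -> (forall u, 0 <= u -> c * Psi1 u <= Psi2 u) ->
  is_fundamental_function Psi1 phi1 -> is_fundamental_function Psi2 phi2 ->
  forall t, 0 < t -> phi1 (c * t) <= phi2 t.
Proof.
  intros Hc Hcmp H1 H2 t Ht. apply (proj2 (H2 t Ht)).
  intros k Hk. apply (proj1 (H1 (c * t) (Rmult_lt_0_compat _ _ Hc Ht))).
  apply (luxemburg_set_compare _ Psi2); auto; lra.
Qed.

Lemma fundamental_function_le (Psi phi : R -> R) :
  (forall u, 0 <= u -> 0 <= Psi u) -> is_fundamental_function Psi phi ->
  forall t1 t2, 0 < t1 <= t2 -> phi t1 <= phi t2.
Proof.
  intros Hnonneg Hphi t1 t2 Ht.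
  replace t1 with (t1 / t2 * t2) by (field; lra).
  apply (fundamental_function_compare Psi Psi); try lra; auto.
  - apply Rdiv_lt_0_compat; lra.
  - intros u Hu. pose proof (Hnonneg u Hu).
    assert (t1 / t2 <= 1) by (apply Rdiv_le_iff; lra). nra.
Qed.

Lemma fundamental_function_of_equation (Psi phi : R -> R) :
  (forall u v, 0 <= u -> u < v -> Psi u < Psi v) ->
  (forall t, 0 < t -> 0 < phi t /\ t * Psi (/ phi t) = 1) ->
  is_fundamental_function Psi phi.
Proof.
  intros Hmono Heq t Ht. destruct (Heq t Ht) as [Hpos Ht1]. split.
  - intros k [Hk Hle]. destruct (Rle_lt_dec (phi t) k) as [| Hlt]; [assumption | exfalso].
    assert (Hinv : / phi t < / k) by (apply Rinv_0_lt_contravar; assumption).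
    pose proof (Hmono _ _ (Rlt_le _ _ (Rinv_0_lt_compat _ Hpos)) Hinv).
    assert (t * Psi (/ phi t) < t * Psi (/ k)) by (apply Rmult_lt_compat_l; assumption).
    lra.
  - intros b Hb. apply Hb. split; [exact Hpos | lra].
Qed.

(* If [k] is admissible at [t], then [sqrt s * k] is admissible at [s t]. *)
Lemma fundamental_function_sqrt_growth (Psi phi : R -> R) :
  (forall l u, 0 < l <= 1 -> 0 <= u -> Psi (l * u) <= l ^ 2 * Psi u) ->
  is_fundamental_function Psi phi ->
  forall s t, 1 <= s -> 0 < t -> phi (s * t) <= sqrt s * phi t.
Proof.
  intros Hscale Hphi s t Hs Ht.
  assert (Hq : 1 <= sqrt s) by (rewrite <- sqrt_1; apply sqrt_le_1_alt, Hs).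
  assert (Hq0 : 0 < sqrt s) by lra.
  rewrite (Rmult_comm (sqrt s)). apply (proj1 (Rdiv_le_iff _ _ _ Hq0)).
  apply (proj2 (Hphi t Ht)). intros k [Hk Hle].
  apply (proj2 (Rdiv_le_iff _ _ _ Hq0)). rewrite (Rmult_comm k).
  apply (proj1 (Hphi (s * t) ltac:(nra))). split; [nra |].
  rewrite Rinv_mult.
  assert (Hl : 0 < / sqrt s <= 1).
  { split; [apply Rinv_0_lt_compat; lra |].
    rewrite <- Rinv_1. apply Rinv_le_contravar; lra. }
  pose proof (Hscale _ (/ k) Hl (Rlt_le _ _ (Rinv_0_lt_compat _ Hk))) as Hsc.
  replace ((/ sqrt s) ^ 2) with (/ s) in Hsc
    by (rewrite <- (pow2_sqrt s) at 1 by lra; field; lra).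
  assert (Hst : s * t * Psi (/ sqrt s * / k) <= s * t * (/ s * Psi (/ k)))
    by (apply Rmult_le_compat_l; [nra | exact Hsc]).
  replace (s * t * (/ s * Psi (/ k))) with (t * Psi (/ k)) in Hst by (field; lra).
  lra.
Qed.

Lemma fundamental_function_exists (Psi : R -> R) :
  (forall t, 0 < t -> exists k, luxemburg_indicator_set Psi t k) ->
  exists phi, is_fundamental_function Psi phi.
Proof.
  intros Hne. apply (glb_family_exists (luxemburg_indicator_set Psi)); [| exact Hne].
  intros t Ht. exists 0. intros k [Hk _]. lra.
Qed.

Lemma dilation_ratio_le (phi Mf : R -> R) s t :
  is_dilation_function phi Mf -> 0 < s -> 0 < t -> phi (s * t) / phi t <= Mf s.
Proof. intros HM Hs Ht. apply (proj1 (HM s Hs)). exists t. split; [exact Ht | reflexivity]. Qed.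

Lemma dilation_function_le_1 (phi Mf : R -> R) :
  (forall t, 0 < t -> 0 < phi t) -> (forall t1 t2, 0 < t1 <= t2 -> phi t1 <= phi t2) ->
  is_dilation_function phi Mf -> forall s, 0 < s <= 1 -> Mf s <= 1.
Proof.
  intros Hpos Hmono HM s Hs. apply (proj2 (HM s (proj1 Hs))).
  intros r [t [Ht ->]]. apply (proj2 (Rdiv_le_iff _ _ _ (Hpos t Ht))).
  rewrite Rmult_1_l. apply Hmono. nra.
Qed.

Lemma dilation_function_submult (phi Mf : R -> R) :
  (forall t, 0 < t -> 0 < phi t) -> is_dilation_function phi Mf ->
  forall s1 s2, 0 < s1 -> 0 < s2 -> Mf (s1 * s2) <= Mf s1 * Mf s2.
Proof.
  intros Hpos HM s1 s2 H1 H2. apply (proj2 (HM _ (Rmult_lt_0_compat _ _ H1 H2))).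
  intros r [t [Ht ->]].
  assert (Ht2 : 0 < s2 * t) by nra.
  pose proof (Hpos t Ht). pose proof (Hpos _ Ht2). pose proof (Hpos (s1 * (s2 * t)) ltac:(nra)).
  replace (phi (s1 * s2 * t) / phi t)
    with (phi (s1 * (s2 * t)) / phi (s2 * t) * (phi (s2 * t) / phi t))
    by (rewrite Rmult_assoc; field; lra).
  apply Rmult_le_compat.
  - left; apply Rdiv_lt_0_compat; assumption.
  - left; apply Rdiv_lt_0_compat; assumption.
  - apply dilation_ratio_le; assumption.
  - apply dilation_ratio_le; assumption.
Qed.

Lemma dilation_function_equiv (phi psi Mpsi : R -> R) a b :
  0 < a -> 0 < b -> (forall t, 0 < t -> 0 < psi t) ->
  (forall t, 0 < t -> psi (a * t) <= phi t <= psi (b * t)) ->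
  is_dilation_function psi Mpsi ->
  exists Mphi, is_dilation_function phi Mphi /\
    forall s, 0 < s -> Mpsi (a * s / b) <= Mphi s <= Mpsi (b * s / a).
Proof.
  intros Ha Hb Hpos Hequiv HMpsi.
  assert (Hratio : forall s t, 0 < s -> 0 < t ->
    psi (a * s / b * (b * t)) / psi (b * t) <= phi (s * t) / phi t <=
    psi (b * s / a * (a * t)) / psi (a * t)).
  { intros s t Hs Ht.
    replace (a * s / b * (b * t)) with (a * (s * t)) by (field; lra).
    replace (b * s / a * (a * t)) with (b * (s * t)) by (field; lra).
    assert (Hst : 0 < s * t) by (apply Rmult_lt_0_compat; assumption).
    pose proof (Hpos (a * t) (Rmult_lt_0_compat _ _ Ha Ht)).
    pose proof (Hpos (a * (s * t)) (Rmult_lt_0_compat _ _ Ha Hst)).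
    destruct (Hequiv t Ht), (Hequiv (s * t) Hst).
    split; apply Rdiv_le_Rdiv; lra. }
  assert (Hsb : forall s, 0 < s -> 0 < a * s / b) by (intros; apply Rdiv_lt_0_compat; nra).
  assert (Hsa : forall s, 0 < s -> 0 < b * s / a) by (intros; apply Rdiv_lt_0_compat; nra).
  destruct (lub_family_exists (fun s r => exists t, 0 < t /\ r = phi (s * t) / phi t))
    as [Mphi HMphi].
  - intros s Hs. exists (Mpsi (b * s / a)). intros r [t [Ht ->]].
    eapply Rle_trans; [apply Hratio; assumption |].
    apply dilation_ratio_le; [assumption | auto | nra].
  - intros s Hs. exists (phi (s * 1) / phi 1), 1. split; [lra | reflexivity].
  - exists Mphi. split; [exact HMphi |]. intros s Hs. split.
    + apply (proj2 (HMpsi _ (Hsb s Hs))). intros r [t [Ht ->]].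
      replace t with (b * (t / b)) by (field; lra).
      eapply Rle_trans; [apply Hratio; [assumption | apply Rdiv_lt_0_compat; assumption] |].
      apply dilation_ratio_le; [exact HMphi | assumption | apply Rdiv_lt_0_compat; assumption].
    + apply (proj2 (HMphi s Hs)). intros r [t [Ht ->]].
      eapply Rle_trans; [apply Hratio; assumption |].
      apply dilation_ratio_le; [assumption | auto | nra].
Qed.

(* Tensor-power trick: [c sqrt (s ^ n) <= M (s ^ n) <= M s ^ n] for every [n]
   forces [M s / sqrt s >= 1]. *)
Lemma sqrt_le_of_submult (M : R -> R) c :
  0 < c -> (forall s1 s2, 1 < s1 -> 1 < s2 -> M (s1 * s2) <= M s1 * M s2) ->
  (forall s, 1 < s -> c * sqrt s <= M s) -> forall s, 1 < s -> sqrt s <= M s.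
Proof.
  intros Hc Hsub Hlow s Hs.
  assert (Hq : 1 < sqrt s) by (rewrite <- sqrt_1; apply sqrt_lt_1_alt; lra).
  assert (HMs : 0 < M s) by (pose proof (Hlow s Hs); nra).
  assert (Hpow : forall n, M (s ^ S n) <= M s ^ S n).
  { induction n as [| n IH]; [simpl; rewrite !Rmult_1_r; lra |].
    change (s ^ S (S n)) with (s * s ^ S n). change (M s ^ S (S n)) with (M s * M s ^ S n).
    assert (1 < s ^ S n) by (apply Rlt_pow_R1; [lra | lia]).
    eapply Rle_trans; [apply Hsub; assumption |].
    apply Rmult_le_compat_l; lra. }
  destruct (Rle_lt_dec (sqrt s) (M s)) as [| Hlt]; [assumption | exfalso].
  set (x := M s / sqrt s).
  assert (Hx : 0 < x < 1).
  { split; [apply Rdiv_lt_0_compat; lra |].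
    apply (Rmult_lt_reg_r (sqrt s)); [lra |]. unfold x. field_simplify; lra. }
  destruct (pow_lt_1_zero x ltac:(rewrite Rabs_pos_eq; lra) c Hc) as [N HN].
  specialize (HN (S N) ltac:(lia)). rewrite Rabs_pos_eq in HN by (apply pow_le; lra).
  assert (Hsn : 1 < s ^ S N) by (apply Rlt_pow_R1; [lra | lia]).
  pose proof (Hlow _ Hsn) as Hl. rewrite sqrt_pow in Hl by lra.
  pose proof (Hpow N) as Hp.
  replace (M s) with (x * sqrt s) in Hp by (unfold x; field; lra).
  rewrite Rpow_mult_distr in Hp.
  assert (0 < sqrt s ^ S N) by (apply pow_lt; lra).
  nra.
Qed.

Lemma upper_index_half (M : R -> R) K :
  (forall s, 1 < s -> sqrt s <= M s <= K * sqrt s) -> is_upper_index M (1 / 2).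
Proof.
  intros HM.
  assert (HK : 1 <= K).
  { destruct (HM 2 ltac:(lra)). assert (0 < sqrt 2) by (apply sqrt_lt_R0; lra). nra. }
  assert (Hln : forall s, 1 < s -> 0 < ln s /\ ln s / 2 <= ln (M s) <= ln K + ln s / 2).
  { intros s Hs. destruct (HM s Hs) as [Hlo Hhi].
    assert (Hq : 0 < sqrt s) by (apply sqrt_lt_R0; lra).
    assert (Hhalf : ln (sqrt s) = ln s / 2).
    { rewrite <- (sqrt_sqrt s) at 2 by lra. rewrite ln_mult by assumption. field. }
    split; [rewrite <- ln_1; apply ln_increasing; lra |].
    rewrite <- Hhalf, <- ln_mult by lra. split; apply ln_le_ln; nra. }
  split.
  - intros r [s [Hs ->]]. destruct (Hln s Hs) as [Hpos [Hlo _]].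
    apply (proj2 (Rle_div_iff _ _ _ Hpos)). lra.
  - intros b Hb. destruct (Rle_lt_dec b (1 / 2)) as [| Hgt]; [assumption | exfalso].
    assert (HlnK : 0 <= ln K) by (rewrite <- ln_1; apply ln_le_ln; lra).
    set (L := (ln K + 1) / (b - 1 / 2)).
    assert (HL : 0 < L) by (apply Rdiv_lt_0_compat; lra).
    assert (Hs : 1 < exp L) by (rewrite <- exp_0; apply exp_increasing, HL).
    assert (Hr : b <= ln (M (exp L)) / ln (exp L)) by (apply Hb; exists (exp L); split; auto).
    rewrite ln_exp in Hr. apply (proj1 (Rle_div_iff _ _ _ HL)) in Hr.
    destruct (Hln _ Hs) as [_ [_ Hhi]]. rewrite ln_exp in Hhi.
    assert ((b - 1 / 2) * L = ln K + 1) by (unfold L; field; lra).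
    lra.
Qed.

Lemma lower_index_zero (M : R -> R) :
  (forall s, 0 < s < 1 -> M s = 1) -> is_lower_index M 0.
Proof.
  intros HM. split.
  - intros r [s [Hs ->]]. rewrite HM, ln_1 by assumption. unfold Rdiv. lra.
  - intros b Hb. apply Hb. exists (1 / 2). split; [lra |].
    rewrite HM, ln_1 by lra. unfold Rdiv. ring.
Qed.

Lemma Psi_e_le_2 t : t <= 2 -> Psi_e t = exp 1 ^ 2 / 4 * t ^ 2.
Proof. intros Ht. unfold Psi_e. destruct (Rle_dec t 2); [reflexivity | contradiction]. Qed.

Lemma Psi_e_gt_2 t : 2 < t -> Psi_e t = exp t.
Proof. intros Ht. unfold Psi_e. destruct (Rle_dec t 2); [lra | reflexivity]. Qed.

Lemma Psi_e_0 : Psi_e 0 = 0.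
Proof. rewrite Psi_e_le_2 by lra. ring. Qed.

Lemma Psi_e_nonneg t : 0 <= Psi_e t.
Proof.
  destruct (Rle_lt_dec t 2).
  - rewrite Psi_e_le_2 by assumption. pose proof (pow2_ge_0 (exp 1)). pose proof (pow2_ge_0 t). nra.
  - rewrite Psi_e_gt_2 by assumption. left; apply exp_pos.
Qed.

Lemma Psi_e_pos t : 0 < t -> 0 < Psi_e t.
Proof.
  intros Ht. destruct (Rle_lt_dec t 2).
  - rewrite Psi_e_le_2 by assumption.
    pose proof (pow_lt _ 2 (exp_pos 1)). pose proof (pow_lt _ 2 Ht). nra.
  - rewrite Psi_e_gt_2 by assumption. apply exp_pos.
Qed.

Lemma quad_le_exp x : 0 <= x -> exp 1 ^ 2 / 4 * x ^ 2 <= exp x.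
Proof.
  intros Hx. rewrite (exp_shift_2 x).
  pose proof (one_add_half_sqr_le_exp (x - 2) ltac:(lra)) as Hsq.
  replace (1 + (x - 2) / 2) with (x / 2) in Hsq by field.
  replace (exp 1 ^ 2 / 4 * x ^ 2) with (exp 1 ^ 2 * (x / 2) ^ 2) by field.
  apply Rmult_le_compat_l; [apply pow2_ge_0 | exact Hsq].
Qed.

Lemma Psi_e_mul_sqr_le y x : 0 < y <= x -> Psi_e y * x ^ 2 <= Psi_e x * y ^ 2.
Proof.
  intros Hyx. destruct (Rle_lt_dec x 2) as [Hx | Hx].
  - rewrite !Psi_e_le_2 by lra. right; ring.
  - rewrite (Psi_e_gt_2 x) by assumption. destruct (Rle_lt_dec y 2) as [Hy | Hy].
    + rewrite Psi_e_le_2 by assumption. pose proof (quad_le_exp x ltac:(lra)).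
      replace (exp 1 ^ 2 / 4 * y ^ 2 * x ^ 2) with (exp 1 ^ 2 / 4 * x ^ 2 * y ^ 2) by ring.
      apply Rmult_le_compat_r; [apply pow2_ge_0 | assumption].
    + rewrite Psi_e_gt_2 by assumption.
      pose proof (one_add_half_sqr_le_exp (x - y) ltac:(lra)).
      assert (Hxy : x <= y * (1 + (x - y) / 2)) by nra.
      assert (x ^ 2 <= y ^ 2 * exp (x - y)).
      { eapply Rle_trans; [apply pow_incr; split; [lra | exact Hxy] |].
        rewrite Rpow_mult_distr. apply Rmult_le_compat_l; [apply pow2_ge_0 | assumption]. }
      replace (exp x) with (exp y * exp (x - y)) by (rewrite <- exp_plus; f_equal; ring).
      pose proof (exp_pos y). nra.
Qed.

Lemma Psi_e_scale l x : 0 < l <= 1 -> 0 <= x -> Psi_e (l * x) <= l ^ 2 * Psi_e x.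
Proof.
  intros Hl Hx. destruct (Req_dec x 0) as [-> | Hx0].
  - rewrite Rmult_0_r, Psi_e_0. lra.
  - pose proof (Psi_e_mul_sqr_le (l * x) x ltac:(split; nra)) as Hmono.
    rewrite Rpow_mult_distr in Hmono.
    apply (Rmult_le_reg_r (x ^ 2)); [apply pow_lt; lra |]. lra.
Qed.

Lemma Psi_e_strict u v : 0 <= u -> u < v -> Psi_e u < Psi_e v.
Proof.
  intros Hu Huv. destruct (Req_dec u 0) as [-> | Hu0].
  - rewrite Psi_e_0. apply Psi_e_pos, Huv.
  - pose proof (Psi_e_mul_sqr_le u v ltac:(lra)). pose proof (Psi_e_pos v ltac:(lra)).
    assert (u ^ 2 < v ^ 2) by nra.
    apply (Rmult_lt_reg_r (v ^ 2)); [nra |]. nra.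
Qed.

Definition Psi_e_slope (x : R) : R :=
  if Rle_dec x 2 then exp 1 ^ 2 / 2 * x else exp x.

Lemma exp_ge_tangent_at_2 y : exp 1 ^ 2 * (y - 1) <= exp y.
Proof.
  rewrite (exp_shift_2 y). apply Rmult_le_compat_l; [apply pow2_ge_0 |].
  pose proof (exp_ineq1_le (y - 2)). lra.
Qed.

Lemma Psi_e_tangent x y : 0 <= x -> 0 <= y -> Psi_e x + Psi_e_slope x * (y - x) <= Psi_e y.
Proof.
  intros Hx Hy. unfold Psi_e_slope. pose proof exp_1_gt_2.
  assert (He2 : 4 < exp 1 ^ 2) by nra.
  destruct (Rle_dec x 2) as [Hx2 | Hx2]; destruct (Rle_lt_dec y 2) as [Hy2 | Hy2].
  - rewrite !Psi_e_le_2 by assumption.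
    assert (0 <= exp 1 ^ 2 / 4 * (y - x) ^ 2) by (apply Rmult_le_pos; [lra | apply pow2_ge_0]).
    lra.
  - rewrite Psi_e_le_2, Psi_e_gt_2 by assumption.
    pose proof (exp_ge_tangent_at_2 y).
    assert (0 <= exp 1 ^ 2 * ((2 - x) * (2 * y - x - 2)))
      by (apply Rmult_le_pos; [lra | apply Rmult_le_pos; lra]).
    lra.
  - rewrite Psi_e_gt_2, Psi_e_le_2 by lra.
    (* the tangent at [x] lies below the tangent at [2] on [y <= 2] *)
    assert (exp x * (1 + y - x) <= exp 1 ^ 2 * (y - 1)).
    { rewrite (exp_shift_2 x).
      pose proof (exp_mul_one_sub_le (x - 2)).
      assert (1 <= exp (x - 2)) by (rewrite <- exp_0; apply exp_le_exp; lra).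
      rewrite Rmult_assoc. apply Rmult_le_compat_l; [apply pow2_ge_0 | nra]. }
    assert (0 <= exp 1 ^ 2 * (y - 2) ^ 2) by (apply Rmult_le_pos; apply pow2_ge_0).
    lra.
  - rewrite !Psi_e_gt_2 by lra.
    replace (exp y) with (exp x * exp (y - x)) by (rewrite <- exp_plus; f_equal; ring).
    pose proof (exp_ineq1_le (y - x)). pose proof (exp_pos x). nra.
Qed.

Lemma convex_of_tangent (f slope : R -> R) :
  (forall x y, 0 <= x -> 0 <= y -> f x + slope x * (y - x) <= f y) -> convex_on_nonneg f.
Proof.
  intros Htan x y l Hx Hy Hl.
  set (z := l * x + (1 - l) * y).
  assert (Hz : 0 <= z) by (unfold z; nra).
  pose proof (Htan z x Hz Hx). pose proof (Htan z y Hz Hy).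
  assert (l * (f z + slope z * (x - z)) + (1 - l) * (f z + slope z * (y - z)) = f z)
    by (unfold z; ring).
  nra.
Qed.

Lemma Psi_e_young : young_function Psi_e.
Proof.
  split; [exact (convex_of_tangent _ _ Psi_e_tangent) |].
  split; [intros; apply Psi_e_nonneg |].
  split; [exact Psi_e_0 |].
  split; [| split].
  - intros eps Heps. pose proof (Psi_e_pos 1 ltac:(lra)) as H1.
    exists (Rmin 1 (eps / Psi_e 1)).
    split; [apply Rmin_pos; [lra | apply Rdiv_lt_0_compat; assumption] |].
    intros u [Hu0 Hud].
    pose proof (Rmin_l 1 (eps / Psi_e 1)). pose proof (Rmin_r 1 (eps / Psi_e 1)).
    pose proof (Psi_e_scale u 1 ltac:(lra) ltac:(lra)) as Hsc. rewrite Rmult_1_r in Hsc.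
    assert (u * Psi_e 1 < eps) by (apply Rlt_div_iff; lra).
    nra.
  - intros B. exists (Rmax 3 B). split; [pose proof (Rmax_l 3 B); lra |].
    intros u Hu. pose proof (Rmax_l 3 B). pose proof (Rmax_r 3 B).
    rewrite Psi_e_gt_2 by lra. pose proof (exp_ineq1_le u). lra.
  - exists 1, 2. split; [lra | split; [lra |]].
    pose proof (Psi_e_strict 1 2 ltac:(lra) ltac:(lra)). lra.
Qed.

Lemma cosh_m1_mul_exp t : 2 * exp t * cosh_m1 t = (exp t - 1) ^ 2.
Proof. unfold cosh_m1, cosh. rewrite exp_Ropp. pose proof (exp_pos t). field. lra. Qed.

Lemma cosh_m1_quadratic_bounds t :
  0 <= t -> t ^ 2 <= 2 * exp t * cosh_m1 t <= (t * exp t) ^ 2.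
Proof.
  intros Ht. rewrite cosh_m1_mul_exp.
  pose proof (exp_ineq1_le t). pose proof (exp_mul_one_sub_le t).
  split; apply pow_incr; lra.
Qed.

Lemma cosh_m1_exp_bounds t : 4 <= exp t -> exp t <= 4 * cosh_m1 t <= 2 * exp t.
Proof.
  intros HE. pose proof (cosh_m1_mul_exp t). pose proof (exp_pos t).
  assert (0 <= exp t * (exp t - 4)) by (apply Rmult_le_pos; lra).
  split; apply (Rmult_le_reg_l (exp t)); lra.
Qed.

Lemma cosh_m1_Psi_e_bounds t :
  0 <= t -> 2 / exp 1 ^ 4 * Psi_e t <= cosh_m1 t <= 2 * Psi_e t.
Proof.
  intros Ht. pose proof (exp_shift_2 t) as Hshift. pose proof (exp_pos t). pose proof exp_1_gt_2.
  assert (He2 : 4 < exp 1 ^ 2) by nra.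
  destruct (Rle_lt_dec t 2) as [Ht2 | Ht2].
  - rewrite Psi_e_le_2 by assumption.
    destruct (cosh_m1_quadratic_bounds t Ht) as [Hlo Hhi].
    assert (HE : exp t <= exp 1 ^ 2).
    { rewrite Hshift; rewrite <- (Rmult_1_r (exp 1 ^ 2)) at 2.
      apply Rmult_le_compat_l; [lra |]. rewrite <- exp_0. apply exp_le_exp. lra. }
    assert (HC : 0 <= cosh_m1 t) by (pose proof (pow2_ge_0 t); nra).
    split.
    + replace (2 / exp 1 ^ 4 * (exp 1 ^ 2 / 4 * t ^ 2)) with (t ^ 2 / (2 * exp 1 ^ 2))
        by (field; lra).
      apply Rdiv_le_iff; [lra |].
      assert (0 <= cosh_m1 t * (exp 1 ^ 2 - exp t)) by (apply Rmult_le_pos; lra).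
      lra.
    + assert (2 * cosh_m1 t <= t ^ 2 * exp t) by (apply (Rmult_le_reg_l (exp t)); lra).
      assert (0 <= t ^ 2 * (exp 1 ^ 2 - exp t)) by (apply Rmult_le_pos; [apply pow2_ge_0 | lra]).
      lra.
  - rewrite Psi_e_gt_2 by assumption.
    assert (HE : exp 1 ^ 2 < exp t).
    { rewrite Hshift; rewrite <- (Rmult_1_r (exp 1 ^ 2)) at 1.
      apply Rmult_lt_compat_l; [lra |]. rewrite <- exp_0. apply exp_increasing. lra. }
    destruct (cosh_m1_exp_bounds t ltac:(lra)) as [Hlo Hhi].
    split; [| lra].
    assert (2 / exp 1 ^ 4 <= / 4).
    { assert (16 < exp 1 ^ 4)
        by (replace (exp 1 ^ 4) with (exp 1 ^ 2 * exp 1 ^ 2) by ring; nra).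
      apply Rdiv_le_iff; lra. }
    assert (0 <= (/ 4 - 2 / exp 1 ^ 4) * exp t) by (apply Rmult_le_pos; lra).
    lra.
Qed.

Lemma phi_e_ge t : exp (-2) <= t -> phi_e t = exp 1 / 2 * sqrt t.
Proof. intros Ht. unfold phi_e. destruct (Rle_dec (exp (-2)) t); [reflexivity | contradiction]. Qed.

Lemma phi_e_lt t : t < exp (-2) -> phi_e t = / - ln t.
Proof. intros Ht. unfold phi_e. destruct (Rle_dec (exp (-2)) t); [lra | reflexivity]. Qed.

Lemma phi_e_exp_opp L : 2 < L -> phi_e (exp (- L)) = / L.
Proof.
  intros HL. rewrite phi_e_lt by (apply exp_increasing; lra).
  rewrite ln_exp, Ropp_involutive. reflexivity.
Qed.

Lemma phi_e_equation t : 0 < t -> 0 < phi_e t /\ t * Psi_e (/ phi_e t) = 1.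
Proof.
  intros Ht. destruct (Rle_lt_dec (exp (-2)) t) as [Hbig | Hsmall].
  - rewrite phi_e_ge by assumption.
    assert (Hq : 1 <= exp 1 * sqrt t).
    { assert (Hse : exp 1 * sqrt (exp (-2)) = 1).
      { replace (exp (-2)) with (exp (-1) ^ 2)
          by (simpl; rewrite Rmult_1_r, <- exp_plus; f_equal; ring).
        rewrite sqrt_pow2 by (left; apply exp_pos). rewrite <- exp_plus, Rplus_opp_r. apply exp_0. }
      assert (exp 1 * sqrt (exp (-2)) <= exp 1 * sqrt t)
        by (apply Rmult_le_compat_l; [left; apply exp_pos | apply sqrt_le_1_alt, Hbig]).
      lra. }
    pose proof (sqrt_lt_R0 t Ht).
    split; [lra |].
    rewrite Psi_e_le_2.
    + rewrite <- (pow2_sqrt t) at 1 by lra. field. split; [lra | apply Rgt_not_eq, exp_pos].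
    + replace (/ (exp 1 / 2 * sqrt t)) with (2 / (exp 1 * sqrt t))
        by (field; split; [lra | apply Rgt_not_eq, exp_pos]).
      apply Rdiv_le_iff; lra.
  - rewrite phi_e_lt by assumption.
    assert (Hl : ln t < -2) by (rewrite <- (ln_exp (-2)); apply ln_increasing; assumption).
    split; [apply Rinv_0_lt_compat; lra |].
    rewrite Rinv_inv, Psi_e_gt_2 by lra. rewrite exp_Ropp, exp_ln by assumption. field. lra.
Qed.

Lemma phi_e_pos t : 0 < t -> 0 < phi_e t.
Proof. intros Ht. exact (proj1 (phi_e_equation t Ht)). Qed.

Lemma fundamental_phi_e : is_fundamental_function Psi_e phi_e.
Proof. exact (fundamental_function_of_equation _ _ Psi_e_strict phi_e_equation). Qed.

(* Near [0], [phi_e t = 1 / log (1 / t)] is slowly varying. *)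
Lemma phi_e_ratio_near_1 s b :
  0 < s <= 1 -> b < 1 -> exists t, 0 < t /\ b < phi_e (s * t) / phi_e t.
Proof.
  intros Hs Hb.
  set (l := - ln s).
  assert (Hl : 0 <= l)
    by (unfold l; pose proof (ln_le_ln s 1 (proj1 Hs) (proj2 Hs)); rewrite ln_1 in *; lra).
  assert (Hd : 0 <= l / (1 - b))
    by (unfold Rdiv; apply Rmult_le_pos; [lra | left; apply Rinv_0_lt_compat; lra]).
  set (L := 3 + l / (1 - b)).
  exists (exp (- L)). split; [apply exp_pos |].
  replace (s * exp (- L)) with (exp (- (L + l)))
    by (unfold l; rewrite Ropp_plus_distr, exp_plus, Ropp_involutive, exp_ln by lra; ring).
  rewrite !phi_e_exp_opp by (unfold L; lra).
  replace (/ (L + l) / / L) with (L / (L + l)) by (field; unfold L; lra).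
  apply Rlt_div_iff; [unfold L; lra |].
  assert (L * (1 - b) = 3 * (1 - b) + l) by (unfold L; field; lra).
  assert (0 <= (1 - b) * l) by (apply Rmult_le_pos; lra).
  lra.
Qed.

Definition M_e (s : R) : R := if Rle_dec s 1 then 1 else sqrt s.

Lemma M_e_le_1 s : s <= 1 -> M_e s = 1.
Proof. intros Hs. unfold M_e. destruct (Rle_dec s 1); [reflexivity | contradiction]. Qed.

Lemma M_e_gt_1 s : 1 < s -> M_e s = sqrt s.
Proof. intros Hs. unfold M_e. destruct (Rle_dec s 1); [lra | reflexivity]. Qed.

Lemma sqrt_le_M_e s : sqrt s <= M_e s.
Proof.
  destruct (Rle_lt_dec s 1) as [Hs | Hs].
  - rewrite M_e_le_1, <- sqrt_1 by assumption. apply sqrt_le_1_alt, Hs.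
  - rewrite M_e_gt_1 by assumption. lra.
Qed.

Lemma dilation_phi_e : is_dilation_function phi_e M_e.
Proof.
  intros s Hs. apply is_lub_intro.
  - intros r [t [Ht ->]]. apply (Rdiv_le_iff _ _ _ (phi_e_pos t Ht)).
    destruct (Rle_lt_dec s 1) as [Hs1 | Hs1].
    + rewrite M_e_le_1, Rmult_1_l by assumption.
      apply (fundamental_function_le Psi_e);
        [intros; apply Psi_e_nonneg | exact fundamental_phi_e | nra].
    + rewrite M_e_gt_1 by assumption.
      apply (fundamental_function_sqrt_growth Psi_e);
        [exact Psi_e_scale | exact fundamental_phi_e | lra | assumption].
  - intros b Hb. destruct (Rle_lt_dec s 1) as [Hs1 | Hs1].
    + rewrite M_e_le_1 in Hb by assumption.
      destruct (phi_e_ratio_near_1 s b (conj Hs Hs1) Hb) as [t [Ht Hlt]].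
      exists (phi_e (s * t) / phi_e t).
      split; [exists t; split; [assumption | reflexivity] | assumption].
    + rewrite M_e_gt_1 in Hb by assumption.
      exists (phi_e (s * 1) / phi_e 1). split; [exists 1; split; [lra | reflexivity] |].
      assert (He : exp (-2) <= 1) by (rewrite <- exp_0; apply exp_le_exp; lra).
      rewrite Rmult_1_r, !phi_e_ge, sqrt_1 by lra.
      replace (exp 1 / 2 * sqrt s / (exp 1 / 2 * 1)) with (sqrt s)
        by (field; apply Rgt_not_eq, exp_pos).
      assumption.
Qed.

Lemma indices_of_equiv_phi_e (phi : R -> R) a b :
  0 < a <= b -> (forall t1 t2, 0 < t1 <= t2 -> phi t1 <= phi t2) ->
  (forall t, 0 < t -> phi_e (a * t) <= phi t <= phi_e (b * t)) ->
  exists Mf, is_dilation_function phi Mf /\ is_upper_index Mf (1 / 2) /\ is_lower_index Mf 0.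
Proof.
  intros Hab Hmono Hequiv.
  assert (Hpos : forall t, 0 < t -> 0 < phi t).
  { intros t Ht. pose proof (phi_e_pos (a * t) ltac:(nra)). pose proof (Hequiv t Ht). lra. }
  destruct (dilation_function_equiv phi phi_e M_e a b) as [Mf [HMf Hbounds]];
    try lra; auto using phi_e_pos, dilation_phi_e.
  exists Mf. split; [exact HMf | split].
  - apply (upper_index_half _ (sqrt (b / a))). intros s Hs. split.
    + apply (sqrt_le_of_submult Mf (sqrt (a / b))); [| | | exact Hs].
      * apply sqrt_lt_R0, Rdiv_lt_0_compat; lra.
      * intros s1 s2 H1 H2. apply (dilation_function_submult phi); auto; lra.
      * intros s' Hs'. rewrite <- sqrt_mult by (try apply Rlt_le, Rdiv_lt_0_compat; lra).
        replace (a / b * s') with (a * s' / b) by (field; lra).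
        eapply Rle_trans; [apply sqrt_le_M_e | apply Hbounds; lra].
    + destruct (Hbounds s ltac:(lra)) as [_ Hup].
      rewrite M_e_gt_1 in Hup by (apply Rlt_div_iff; nra).
      rewrite <- sqrt_mult by (try apply Rlt_le, Rdiv_lt_0_compat; lra).
      replace (b / a * s) with (b * s / a) by (field; lra). exact Hup.
  - apply lower_index_zero. intros s Hs. apply Rle_antisym.
    + apply (dilation_function_le_1 phi); auto; lra.
    + destruct (Hbounds s ltac:(lra)) as [Hlo _].
      rewrite M_e_le_1 in Hlo by (apply Rdiv_le_iff; nra). exact Hlo.
Qed.

Lemma indices_of_equiv_Psi_e (Psi : R -> R) m M :
  0 < m <= M -> (forall u, 0 <= u -> m * Psi_e u <= Psi u <= M * Psi_e u) ->
  exists phi Mf, is_fundamental_function Psi phi /\ is_dilation_function phi Mf /\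
    is_upper_index Mf (1 / 2) /\ is_lower_index Mf 0.
Proof.
  intros HmM Hequiv.
  assert (Hlo : forall u, 0 <= u -> m * Psi_e u <= Psi u) by (intros u Hu; apply Hequiv, Hu).
  assert (Hhi : forall u, 0 <= u -> / M * Psi u <= Psi_e u).
  { intros u Hu. destruct (Hequiv u Hu) as [_ Hup].
    replace (Psi_e u) with (/ M * (M * Psi_e u)) by (field; lra).
    apply Rmult_le_compat_l; [left; apply Rinv_0_lt_compat; lra | exact Hup]. }
  destruct (fundamental_function_exists Psi) as [phi Hphi].
  { intros t Ht. exists (phi_e (M * t)).
    replace t with (/ M * (M * t)) at 1 by (field; lra).
    apply (luxemburg_set_compare _ Psi_e); [left; apply Rinv_0_lt_compat; lra | nra | exact Hhi |].
    destruct (phi_e_equation (M * t) ltac:(nra)). split; [assumption | lra]. }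
  exists phi.
  destruct (indices_of_equiv_phi_e phi m M) as [Mf HMf]; [exact HmM | | |].
  - apply (fundamental_function_le Psi); [| exact Hphi].
    intros u Hu. pose proof (Hlo u Hu). pose proof (Psi_e_nonneg u). nra.
  - intros t Ht. split.
    + apply (fundamental_function_compare Psi_e Psi); auto using fundamental_phi_e; lra.
    + replace t with (/ M * (M * t)) at 1 by (field; lra).
      apply (fundamental_function_compare Psi Psi_e); auto using fundamental_phi_e.
      * apply Rinv_0_lt_compat; lra.
      * nra.
  - exists Mf. split; [exact Hphi | exact HMf].
Qed.

Lemma cosh_m1_equiv_Psi_e :
  exists m M, 0 < m /\ m < M /\
    forall t, 0 <= t -> m * Psi_e t <= cosh_m1 t /\ cosh_m1 t <= M * Psi_e t.
Proof.
  exists (2 / exp 1 ^ 4), 2.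
  assert (He4 : 1 < exp 1 ^ 4) by (apply Rlt_pow_R1; [pose proof exp_1_gt_2; lra | lia]).
  split; [apply Rdiv_lt_0_compat; lra |].
  split; [| exact cosh_m1_Psi_e_bounds].
  pose proof (Rinv_1_lt_contravar 1 _ (Rle_refl 1) He4) as Hinv. rewrite Rinv_1 in Hinv.
  unfold Rdiv. lra.
Qed.

Theorem mainTheorem9 :
  (* (a) *)
  (young_function Psi_e /\
   exists m M, 0 < m /\ m < M /\
     forall t, 0 <= t -> m * Psi_e t <= cosh_m1 t /\ cosh_m1 t <= M * Psi_e t) /\
  (* (b) *)
  is_fundamental_function Psi_e phi_e /\
  (* (c) *)
  (forall s, 0 < s -> is_lub (fun r => exists t, 0 < t /\ r = phi_e (s * t) / phi_e t)
                        (if Rle_dec s 1 then 1 else sqrt s)) /\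
  (* (d) *)
  (forall Psi, (Psi = Psi_e \/ Psi = cosh_m1) ->
     exists phi Mf, is_fundamental_function Psi phi /\ is_dilation_function phi Mf /\
       is_upper_index Mf (1/2) /\ is_lower_index Mf 0).
Proof.
  split; [split; [exact Psi_e_young | exact cosh_m1_equiv_Psi_e] |].
  split; [exact fundamental_phi_e |].
  split; [exact dilation_phi_e |].
  intros Psi [-> | ->].
  - apply (indices_of_equiv_Psi_e Psi_e 1 1); [lra | intros u Hu; lra].
  - destruct cosh_m1_equiv_Psi_e as [m [M [Hm [HmM Hbounds]]]].
    apply (indices_of_equiv_Psi_e cosh_m1 m M); [lra | exact Hbounds].
Qed.
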